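(* For every packet $p\in\Pi$, every edge $e=(t,r)\in E(p)$ and every integer $\tau\ge r_p$, $$\mathrm{imp}(p,e)-d(e)\big(\beta_{t,\tau}+\beta_{r,\tau}\big)\;\le\;2\,w_p\,\big(\tau+\Delta(e)-r_p\big),$$ where $\mathrm{imp}(p,e)$ is the quantity computed when $p$ is processed by ALG.
   Context: Network. $S,T,R,D$ are pairwise disjoint finite sets (sources, transmitters, receivers, destinations). Each transmitter $t\in T$ is attached to a source $s(t)\in S$ via a link of integer delay $d(s(t),t)\ge 0$; each receiver $r\in R$ is attached to a destination $d(r)\in D$ via a link of integer delay $d(r,d(r))\ge 0$. A set $E_R\subseteq T\times R$ of reconfigurable edges is given, each $e\in E_R$ with integer delay $d(e)\ge 1$. A set $E_\ell\subseteq S\times D$ of fixed links is given, each with integer delay $\ge0$. For $e=(t,r)\in E_R$ put $\Delta(e)=d(s(t),t)+d(e)+d(r,d(r))$. Two edges of $E_R$ are adjacent if they share a transmitter or a receiver (an edge is adjacent to itself). Packets. $\Pi$ is a finite set of unit-size packets; packet $p$ has weight $w_p>0$, release time $r_p\in\mathbb Z_{\ge1}$, source $s_p$, destination $d_p$. Let $E(p)=\{(t,r)\in E_R: s(t)=s_p,\ d(r)=d_p\}$; assume $E(p)\neq\emptyset$ for all $p$. $\Pi_\ell$ is the set of packets with $(s_p,d_p)\in E_\ell$, and $\ell_p:=d(s_p,d_p)$ for them. Fix a total order $\prec$ on $\Pi$ with $r_p<r_q\Rightarrow p\prec q$. Algorithm ALG. Packets are processed in the order $\prec$; $p$ is processed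 at time $r_p$, before transmission step $r_p$. A packet assigned to a reconfigurable edge $e$ is split into $d(e)$ chunks of weight $w_p/d(e)$ assigned to $e$; $p(c)$, $w_c$, $e(c)$ denote the packet, weight and edge of chunk $c$. A chunk is pending until transmitted; $W(C)$ is the total weight of a set $C$ of chunks. When $p$ is processed, $B(p)$ is the set of pending chunks of packets $p'\prec p$; for $e=(t,r)\in E(p)$, $\mathrm{Adj}(p,e)$ = chunks of $B(p)$ whose edge is adjacent to $e$, $H(p,e)=\{c\in\mathrm{Adj}(p,e):w_c\ge w_p/d(e)\}$, $L(p,e)=\mathrm{Adj}(p,e)\setminus H(p,e)$, and $\mathrm{imp}(p,e)=w_p(d(s_p,t)+\frac{d(e)+1}{2}+d(r,d_p))+w_p|H(p,e)|+d(e)W(L(p,e))$. With $e^*\in\arg\min_{e\in E(p)}\mathrm{imp}(p,e)$: if $p\in\Pi_\ell$ and $w_p\ell_p\le\mathrm{imp}(p,e^* )$, $p$ is sent over its fixed link; otherwise $p$ is assigned to $e(p):=e^*$ and split into chunks. Scheduler: at each integer $\tau\ge1$, build $M_\tau$ greedily over pending chunks in order of decreasing weight (ties by $\prec$ on packets, then arbitrary), adding $c$ iff no chunk already in $M_\tau$ has an edge adjacent to $e(c)$; chunks of $M_\tau$ are transmitted at step $\tau$. If chunk $c$ of $p$ is transmitted at step $\tau_c$ via $e(p)=(t,r)$, its completion time is $f_c=\tau_c+1+d(s_p,t)+d(r,d_p)$, and $c$ is active at integer times $\tau$ with $r_p\le\tau<f_c$. Dual variables $\beta$: for $t\in T$ and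 integer $\tau\ge1$, $\beta_{t,\tau}$ is the total weight of chunks active at $\tau$ whose assigned edge has transmitter $t$; for $r\in R$, $\beta_{r,\tau}$ is the total weight of chunks active at $\tau$ whose assigned edge has receiver $r$. *)

From HB Require Import structures.
From mathcomp Require Import all_boot all_order all_algebra.
Import Order.TTheory GRing.Theory Num.Theory.
Local Open Scope ring_scope.

(* The network: S, T, R, D are distinct finite types (hence pairwise disjoint). *)
Record network := Network {
  Src : finType;
  Tr  : finType;
  Rc  : finType;
  Dst : finType;
  srcOf : Tr -> Src;
  dST   : Tr -> nat;          (* d(s(t),t) *)
  dstOf : Rc -> Dst;
  dRD   : Rc -> nat;          (* d(r,d(r)) *)
  ER    : {set Tr * Rc};      (* reconfigurable edges *)
  dE    : Tr * Rc -> nat;     (* d(e), only meaningful on ER *)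
  El    : {set Src * Dst};    (* fixed links *)
  dl    : Src * Dst -> nat    (* delay of fixed links, only meaningful on El *)
}.


Notation edge N := (Tr N * Rc N)%type.

(* Packets are indexed by 'I_np; the total order "prec" on packets is the
   index order on 'I_np. *)
Record packetSet (R : realFieldType) (N : network) := PacketSet {
  np   : nat;
  wt   : 'I_np -> R;
  release : 'I_np -> nat;
  psrc : 'I_np -> Src N;
  pdst : 'I_np -> Dst N
}.

Arguments np {R N}.
Arguments wt {R N}.
Arguments release {R N}.
Arguments psrc {R N}.
Arguments pdst {R N}.

Definition adj {N : network} (e f : edge N) : bool := (e.1 == f.1) || (e.2 == f.2).

Definition adjOpt {N : network} (e f : option (edge N)) : bool :=
  match e, f with Some e, Some f => adj e f | _, _ => false end.

Definition Delta (N : network) (e : edge N) : nat := (dST N e.1 + dE N e + dRD N e.2)%N.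


Definition Ep {R : realFieldType} {N : network} (P : packetSet R N) (p : 'I_(np P))
  : {set edge N} :=
  [set e in ER N | (srcOf N e.1 == psrc P p) && (dstOf N e.2 == pdst P p)].

Definition inPil {R : realFieldType} {N : network} (P : packetSet R N) (p : 'I_(np P)) : bool :=
  (psrc P p, pdst P p) \in El N.

Definition ellp {R : realFieldType} {N : network} (P : packetSet R N) (p : 'I_(np P)) : nat :=
  dl N (psrc P p, pdst P p).

(* A run's decisions: dec p = None means p is sent over its fixed link,
   dec p = Some e means p is assigned to e(p) = e and split into d(e) chunks. *)
Definition decision {R : realFieldType} {N : network} (P : packetSet R N) :=
  'I_(np P) -> option (edge N).

Definition chunkW {R : realFieldType} {N : network} {P : packetSet R N}
  (dec : decision P) (p : 'I_(np P)) : R :=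
  match dec p with Some e => wt P p / (dE N e)%:R | None => 0 end.

Definition prio {R : realFieldType} {N : network} {P : packetSet R N}
  (dec : decision P) (p q : 'I_(np P)) : bool :=
  (chunkW dec q < chunkW dec p) || ((chunkW dec p == chunkW dec q) && (p <= q)%N).

(* number of pending chunks of p just before step tau, given the number
   cnt p of chunks of p transmitted at steps < tau *)
Definition pendingAt {R : realFieldType} {N : network} {P : packetSet R N}
  (dec : decision P) (cnt : 'I_(np P) -> nat) (tau : nat) (p : 'I_(np P)) : nat :=
  match dec p with
  | Some e => if (release P p <= tau)%N then (dE N e - cnt p)%N else 0%N
  | None => 0%N
  end.

(* Greedy construction of M_tau: chunks scanned by decreasing priority; all
   chunks of one packet are identical and share an edge (adjacent to itself),
   so M_tau contains at most one chunk per packet and is described by the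
   list of packets one of whose chunks is in M_tau. *)
Definition greedyM {R : realFieldType} {N : network} {P : packetSet R N}
  (dec : decision P) (cnt : 'I_(np P) -> nat) (tau : nat) : seq 'I_(np P) :=
  foldl (fun M p =>
           if (0 < pendingAt dec cnt tau p)%N && all (fun q => ~~ adjOpt (dec q) (dec p)) M
           then rcons M p else M)
        [::] (sort (prio dec) (enum 'I_(np P))).

Definition inM {R : realFieldType} {N : network} {P : packetSet R N}
  (dec : decision P) (cnt : 'I_(np P) -> nat) (tau : nat) (p : 'I_(np P)) : bool :=
  (0 < tau)%N && (p \in greedyM dec cnt tau).

(* sentBefore dec k p = number of chunks of p transmitted at steps tau < k *)
Fixpoint sentBefore {R : realFieldType} {N : network} {P : packetSet R N}
  (dec : decision P) (k : nat) : 'I_(np P) -> nat :=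
  match k with
  | 0 => fun _ => 0%N
  | k'.+1 => fun p => (sentBefore dec k' p + inM dec (sentBefore dec k') k' p)%N
  end.

Definition sentAt {R : realFieldType} {N : network} {P : packetSet R N}
  (dec : decision P) (tau : nat) (p : 'I_(np P)) : bool :=
  inM dec (sentBefore dec tau) tau p.

(* number of chunks of p' in B(p) (pending chunks of packets p' prec p at time r_p,
   before transmission step r_p) *)
Definition pendB {R : realFieldType} {N : network} {P : packetSet R N}
  (dec : decision P) (p p' : 'I_(np P)) : nat :=
  if (p' < p)%N then pendingAt dec (sentBefore dec (release P p)) (release P p) p' else 0%N.

Definition imp {R : realFieldType} {N : network} {P : packetSet R N}
  (dec : decision P) (p : 'I_(np P)) (e : edge N) : R :=
  let wp := wt P p in
  let de : R := (dE N e)%:R in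
  wp * ((dST N e.1)%:R + (de + 1) / 2 + (dRD N e.2)%:R)
  + wp * (\sum_(q < np P | adjOpt (dec q) (Some e) && (wp / de <= chunkW dec q))
            (pendB dec p q)%:R)
  + de * (\sum_(q < np P | adjOpt (dec q) (Some e) && (chunkW dec q < wp / de))
            (pendB dec p q)%:R * chunkW dec q).

(* dec is a run of ALG (any tie-breaking in the argmin) *)
Definition validALG {R : realFieldType} {N : network} {P : packetSet R N}
  (dec : decision P) : Prop :=
  forall p : 'I_(np P),
  match dec p with
  | Some e =>
      [/\ e \in Ep P p,
          (forall e', e' \in Ep P p -> imp dec p e <= imp dec p e') &
          ~~ (inPil P p && (wt P p * (ellp P p)%:R <= imp dec p e))]
  | None =>
      inPil P p /\
      exists2 e, e \in Ep P p /\ (forall e', e' \in Ep P p -> imp dec p e <= imp dec p e')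
               & wt P p * (ellp P p)%:R <= imp dec p e
  end.

(* number of chunks of p active at tau: r_p <= tau < f_c, with
   f_c = tau_c + 1 + d(s_p,t) + d(r,d_p) *)
Definition activeCnt {R : realFieldType} {N : network} {P : packetSet R N}
  (dec : decision P) (tau : nat) (p : 'I_(np P)) : nat :=
  match dec p with
  | Some e =>
      if (release P p <= tau)%N then
        (dE N e - \sum_(t' < tau | sentAt dec t' p && (t' + 1 + dST N e.1 + dRD N e.2 <= tau)%N) 1)%N
      else 0%N
  | None => 0%N
  end.

Definition betaT {R : realFieldType} {N : network} {P : packetSet R N}
  (dec : decision P) (t : Tr N) (tau : nat) : R :=
  \sum_(p < np P | if dec p is Some e then e.1 == t else false)
     (activeCnt dec tau p)%:R * chunkW dec p.

Definition betaR {R : realFieldType} {N : network} {P : packetSet R N}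
  (dec : decision P) (r : Rc N) (tau : nat) : R :=
  \sum_(p < np P | if dec p is Some e then e.2 == r else false)
     (activeCnt dec tau p)%:R * chunkW dec p.

From HB Require Import structures.
From mathcomp Require Import all_boot all_order all_algebra.
From mathcomp Require Import zify lra.
Import Order.TTheory GRing.Theory Num.Theory.
Local Open Scope ring_scope.

(* The bound holds for every sequence of decisions (it only uses how the
   scheduler behaves).
   The proof splits imp(p,e) into three parts.
   - Fixed part: w_p (d(s_p,t) + (d(e)+1)/2 + d(r,d_p)) <= w_p Delta(e), as d(e) >= 1.
   - Combinatorial part: every chunk of B(p) adjacent to e is either still
     active at tau, or was transmitted during [r_p, tau).  Since M_tau is a
     matching, at most two chunks adjacent to e are transmitted per step, so
     at most 2 (tau - r_p) chunks of the second kind exist.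
   - Charging: a heavy chunk (weight >= w_p/d(e)) costs w_p, a light one costs
     d(e) w_c; an active chunk is charged d(e) w_c, a transmitted one w_p.
     Active chunks adjacent to e are counted in beta_t + beta_r.
   The file first proves the scheduler facts, then the charging inequality,
   and finally combines them. *)

Section Scheduler.
Context {R : realFieldType} {N : network} {P : packetSet R N} (dec : decision P).

Lemma sentBefore_sum k q : sentBefore dec k q = (\sum_(0 <= t < k) sentAt dec t q)%N.
Proof.
elim: k => [|k IH]; first by rewrite big_geq.
by rewrite big_nat_recr //= IH.
Qed.

Lemma adjC (e f : edge N) : adj e f = adj f e.
Proof. by rewrite /adj eq_sym [e.2 == _]eq_sym. Qed.

Lemma adjOptC (e f : option (edge N)) : adjOpt e f = adjOpt f e.
Proof. by case: e; case: f => //= *; rewrite adjC. Qed.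

Definition matching (M : seq 'I_(np P)) : Prop :=
  forall a b, a \in M -> b \in M -> a != b -> ~~ adjOpt (dec a) (dec b).

Lemma greedy_scan_matching (c : 'I_(np P) -> bool) s M0 : matching M0 ->
  matching (foldl (fun M p => if c p && all (fun q => ~~ adjOpt (dec q) (dec p)) M
           then rcons M p else M) M0 s).
Proof.
elim: s M0 => [|x s IH] M0 HM //=.
apply: IH; case: ifP => // /andP[_ /allP Hall].
move=> a b; rewrite !mem_rcons !inE => /orP[/eqP->|Ha] /orP[/eqP->|Hb] Hab.
- by rewrite eqxx in Hab.
- by rewrite adjOptC; apply: Hall.
- by apply: Hall.
- by apply: HM.
Qed.

Lemma greedyM_matching cnt t : matching (greedyM dec cnt t).
Proof. by apply: greedy_scan_matching => a b. Qed.

Lemma matching_clique_le1 (M : seq 'I_(np P)) (A : {pred 'I_(np P)}) :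
  matching M -> {subset A <= M} ->
  (forall a b, a \in A -> b \in A -> adjOpt (dec a) (dec b)) -> (#|A| <= 1)%N.
Proof.
move=> HM HAM Hadj; apply/card_le1_eqP => a b Ha Hb.
apply/eqP; apply: contraT => Hab.
by move: (HM _ _ (HAM _ Hb) (HAM _ Ha) Hab); rewrite Hadj.
Qed.

(* At each step at most two chunks on edges adjacent to e are transmitted:
   one sharing the transmitter of e and one sharing its receiver. *)
Lemma sentAt_adjacent_le2 (e : edge N) t :
  (\sum_(q < np P | adjOpt (dec q) (Some e)) sentAt dec t q <= 2)%N.
Proof.
set M := greedyM dec (sentBefore dec t) t.
pose At := [pred q : 'I_(np P) | (q \in M) && (if dec q is Some f then f.1 == e.1 else false)].
pose Ar := [pred q : 'I_(np P) | (q \in M) && (if dec q is Some f then f.2 == e.2 else false)].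
have HM := greedyM_matching (sentBefore dec t) t.
have Ht : (#|At| <= 1)%N.
  apply: (@matching_clique_le1 _ _ HM) => [q /andP[]//|a b /andP[_ Ha] /andP[_ Hb]].
  by case: (dec a) Ha => // fa /eqP Ha; case: (dec b) Hb => // fb /eqP Hb;
    rewrite /= /adj Ha Hb eqxx.
have Hr : (#|Ar| <= 1)%N.
  apply: (@matching_clique_le1 _ _ HM) => [q /andP[]//|a b /andP[_ Ha] /andP[_ Hb]].
  by case: (dec a) Ha => // fa /eqP Ha; case: (dec b) Hb => // fb /eqP Hb;
    rewrite /= /adj Ha Hb eqxx orbT.
apply: (@leq_trans (#|At| + #|Ar|)); last by rewrite (leq_add Ht Hr).
rewrite -!sum1_card [\sum_(i in At) _]big_mkcond [\sum_(i in Ar) _]big_mkcond.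
rewrite -big_split /= big_mkcond /=; apply: leq_sum => q _.
rewrite /sentAt /inM -/M /At /Ar !inE.
case: (dec q) => [f|] //=; rewrite /adj.
by case: (q \in M); case: (f.1 == e.1); case: (f.2 == e.2); case: (0 < t)%N.
Qed.

Definition sentDuring (p : 'I_(np P)) (tau : nat) (q : 'I_(np P)) : nat :=
  (\sum_(release P p <= t < tau) sentAt dec t q)%N.

Lemma pendB_le_active_sent p q tau : (release P p <= tau)%N ->
  (pendB dec p q <= activeCnt dec tau q + sentDuring p tau q)%N.
Proof.
move=> rp_le_tau; rewrite /pendB /pendingAt /activeCnt /sentDuring.
case: (q < p)%N => //; case: (dec q) => [f|] //.
case Hrq: (release P q <= release P p)%N => //.
rewrite (leq_trans Hrq rp_le_tau).
set done := (\sum_(t' < tau | _) 1)%N.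
have Hdone : (done <= sentBefore dec (release P p) q
                     + \sum_(release P p <= t < tau) sentAt dec t q)%N.
  rewrite sentBefore_sum -big_cat_nat // big_mkord /done big_mkcond /=.
  by apply: leq_sum => i _; case: (sentAt dec i q); case: (_ <= tau)%N.
lia.
Qed.

Lemma sentDuring_adjacent_le p tau (e : edge N) :
  (\sum_(q < np P | adjOpt (dec q) (Some e)) sentDuring p tau q
     <= (tau - release P p) * 2)%N.
Proof.
rewrite /sentDuring exchange_big /= -sum_nat_const_nat.
by apply: leq_sum => t _; apply: sentAt_adjacent_le2.
Qed.

End Scheduler.

Lemma charge_packet (R : realFieldType) (w d c : R) (a y n : nat) :
  0 < w -> 0 < d -> 0 <= c -> (n <= a + y)%N ->
  (if w / d <= c then w * n%:R else d * (n%:R * c)) <= d * (a%:R * c) + w * y%:R.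
Proof.
move=> w0 d0 c0 Hn.
have Hn' : (n%:R : R) <= a%:R + y%:R by rewrite -natrD ler_nat.
have a0 : 0 <= (a%:R : R) by apply: ler0n.
have y0 : 0 <= (y%:R : R) by apply: ler0n.
case: ifP => [|/negbT]; [rewrite ler_pdivrMr // => H | rewrite -ltNge ltr_pdivlMr // => H].
- have h1 : 0 <= w * (a%:R + y%:R - n%:R) by apply: mulr_ge0; [apply: ltW | rewrite subr_ge0].
  have h2 : 0 <= a%:R * (c * d - w) by apply: mulr_ge0 => //; rewrite subr_ge0.
  nra.
- have h1 : 0 <= d * c * (a%:R + y%:R - n%:R).
    by apply: mulr_ge0; [apply: mulr_ge0 => //; apply: ltW | rewrite subr_ge0].
  have h2 : 0 <= y%:R * (w - c * d) by apply: mulr_ge0 => //; rewrite subr_ge0 ltW.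
  nra.
Qed.

Lemma charge_sum {R : realFieldType} {I : finType} (A : pred I)
    {w d : R} {c : I -> R} {a y n : I -> nat} :
  0 < w -> 0 < d -> (forall q, 0 <= c q) -> (forall q, n q <= a q + y q)%N ->
  w * (\sum_(q | A q && (w / d <= c q)) (n q)%:R)
  + d * (\sum_(q | A q && (c q < w / d)) (n q)%:R * c q)
  <= d * (\sum_(q | A q) (a q)%:R * c q) + w * (\sum_(q | A q) ((y q)%:R : R)).
Proof.
move=> w0 d0 c0 Hn.
pose cost q := if w / d <= c q then w * (n q)%:R else d * ((n q)%:R * c q).
rewrite !mulr_sumr (eq_bigr cost) => [|q /andP[_ H]]; last by rewrite /cost H.
rewrite [X in _ + X <= _](eq_bigl (fun q => A q && ~~ (w / d <= c q))); last first.
  by move=> q; rewrite ltNge.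
rewrite [X in _ + X <= _](eq_bigr cost) => [|q /andP[_ H]]; last by rewrite /cost (negbTE H).
rewrite -bigID -big_split /=.
by apply: ler_sum => q _; apply: charge_packet.
Qed.

Section Duals.
Context {R : realFieldType} {N : network} {P : packetSet R N} (dec : decision P).
Hypothesis wt_pos : forall p, 0 < wt P p.

Lemma chunkW_ge0 q : 0 <= chunkW dec q.
Proof.
rewrite /chunkW; case: (dec q) => [f|] //.
by apply: divr_ge0; [apply: ltW | apply: ler0n].
Qed.

(* The weight of the chunks active at tau on edges adjacent to e = (t,r) is
   counted in beta_t (edges through t) or beta_r (edges through r). *)
Lemma active_adjacent_le_beta (e : edge N) tau :
  \sum_(q < np P | adjOpt (dec q) (Some e)) (activeCnt dec tau q)%:R * chunkW dec q
  <= betaT dec e.1 tau + betaR dec e.2 tau.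
Proof.
rewrite /betaT /betaR big_mkcond [X in _ <= X + _]big_mkcond
   [X in _ <= _ + X]big_mkcond -big_split /=.
apply: ler_sum => q _.
have h := mulr_ge0 (ler0n R (activeCnt dec tau q)) (chunkW_ge0 q).
case: (dec q) => [f|] /=; last by rewrite addr0.
rewrite /adj.
by case: (f.1 == e.1); case: (f.2 == e.2) => //=; rewrite ?addr0 ?add0r ?lerDl ?lexx.
Qed.

End Duals.

(* The fixed part of imp(p,e) is at most Delta(e), as (d+1)/2 <= d for d >= 1. *)
Lemma fixed_cost_le_Delta {R : realFieldType} {N : network} {e : edge N} :
  (1 <= dE N e)%N ->
  (dST N e.1)%:R + ((dE N e)%:R + 1) / 2 + (dRD N e.2)%:R <= (Delta N e)%:R :> R.
Proof.
move=> d1; rewrite /Delta !natrD lerD2r lerD2l.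
have d1' : 1 <= (dE N e)%:R :> R by rewrite ler1n.
rewrite ler_pdivrMr //; lra.
Qed.

Theorem mainTheorem5 (R : realFieldType) (N : network) (P : packetSet R N)
  (dec : decision P) :
  (forall e, e \in ER N -> (1 <= dE N e)%N) ->
  (forall p, 0 < wt P p) ->
  (forall p, (1 <= release P p)%N) ->
  (forall p, Ep P p != set0) ->
  (forall p q : 'I_(np P), (release P p < release P q)%N -> (p < q)%N) ->
  validALG dec ->
  forall (p : 'I_(np P)) (e : edge N) (tau : nat),
    e \in Ep P p -> (release P p <= tau)%N ->
    imp dec p e - (dE N e)%:R * (betaT dec e.1 tau + betaR dec e.2 tau)
      <= 2 * wt P p * (tau%:R + (Delta N e)%:R - (release P p)%:R).
Proof.
move=> dE_ge1 wt_pos _ _ _ _ p e tau e_in rp_le_tau.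
have d1 : (1 <= dE N e)%N by apply: dE_ge1; move: e_in; rewrite inE => /andP[].
have d0 : 0 < (dE N e)%:R :> R by rewrite ltr0n.
have w0 := wt_pos p.
have charged := charge_sum (fun q => adjOpt (dec q) (Some e)) w0 d0 (chunkW_ge0 dec wt_pos)
  (fun q => pendB_le_active_sent dec p q tau rp_le_tau).
have active := ler_wpM2l (ltW d0) (active_adjacent_le_beta dec wt_pos e tau).
have sent : \sum_(q < np P | adjOpt (dec q) (Some e)) (sentDuring dec p tau q)%:R
            <= 2 * (tau%:R - (release P p)%:R) :> R.
  by rewrite -natr_sum -natrB // -natrM ler_nat mulnC sentDuring_adjacent_le.
have fixed := ler_wpM2l (ltW w0) (@fixed_cost_le_Delta R _ _ d1).
have imp_le : imp dec p e <= wt P p * (Delta N e)%:R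
    + ((dE N e)%:R * (betaT dec e.1 tau + betaR dec e.2 tau)
       + wt P p * (2 * (tau%:R - (release P p)%:R))).
  rewrite /imp -addrA; apply: lerD; first exact: fixed.
  exact: le_trans charged (lerD active (ler_wpM2l (ltW w0) sent)).
have Delta0 : 0 <= wt P p * (Delta N e)%:R by rewrite mulr_ge0 // ltW.
move: imp_le Delta0; set B := betaT _ _ _ + _; lra.
Qed.
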